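(* Let $T_n=T(x_1\dots x_n,k)$ with $x_1,\dots,x_n$ i.i.d. uniform on $\{B,b,R,r\}$ and $k$ uniform on $\{1,\dots,n\}$. Then for all $t>0$, $$\mathbb P\big[|\partial T_n|\ge t\sqrt n\big]\le 2\exp\!\left(-\frac{t^2}{32}\right),$$ where $|\partial T_n|$ is the number of boundary vertices of $T_n$.
   Context: Necklace construction (Sheffield). Given a finite word $X=x_1\dots x_n$ in $\{B,b,R,r\}$, build inductively disc triangulations $D_0\subset\dots\subset D_n$ in the closed upper half-plane with blue/red vertices and an active edge with blue endpoint $b_j$ and red endpoint $r_j$; initially non-positive integers are blue, positive integers red, $b_0=0,r_0=1$. Step according to $x_{j+1}$: (B) new blue vertex $b_{j+1}$, triangle $(b_j,r_j,b_{j+1})$, $r_{j+1}=r_j$; (R) new red vertex $r_{j+1}$, triangle $(b_j,r_j,r_{j+1})$, $b_{j+1}=b_j$; (b) $b_{j+1}$ = counterclockwise boundary neighbour of $b_j$ (or $m-1$, adding edge $[m-1,m]$, if $b_j=m\in\mathbb Z$), triangle $(b_{j+1},b_j,r_j)$, $r_{j+1}=r_j$; (r) $r_{j+1}$ = clockwise boundary neighbour of $r_j$ (or $m+1$, adding $[m,m+1]$, if $r_j=m\in\mathbb Z$), triangle $(b_j,r_j,r_{j+1})$, $b_{j+1}=b_j$. $T_+(X)$ is the disc triangulation $D_n$ (consisting of the $n$ triangles) rooted at the first triangle; $T(X,k)$ is $T_+(X)$ rerooted at the triangle created at step $k$. $\partial T_n$ is the set of vertices on the topological boundary of the support (union of the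 $n$ triangles) of $T_n$. *)

From Stdlib Require Import Reals ZArith List Bool.
Import ListNotations.

Inductive letter := LB | Lb | LR | Lr.

(* Vertices: the integers (initial vertices on the real line; z <= 0 blue,
   z > 0 red) and the vertex created at step j (VNew j). *)
Inductive vertex := VInt (z : Z) | VNew (j : nat).

Definition vertex_eq_dec (u v : vertex) : {u = v} + {u <> v}.
Proof. decide equality; [apply Z.eq_dec | apply Nat.eq_dec]. Defined.

Definition veqb (u v : vertex) : bool := if vertex_eq_dec u v then true else false.

(* State of the construction after j steps: the disc triangulation D_j.
   Its support lies in the closed upper half-plane; its boundary cycle
   consists of the real segment [lo, hi] (all integers lo..hi, joined by the
   edges [m,m+1]) together with the upper boundary path [top], listed from
   left (lo) to right (hi), i.e. clockwise.  [bact], [ract] are the blue and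
   red endpoints of the active edge (consecutive on [top]), and [tris] is
   the list of triangles, in order of creation. *)
Record state := mkState {
  lo : Z; hi : Z; top : list vertex;
  bact : vertex; ract : vertex;
  tris : list (vertex * vertex * vertex) }.

Definition init_state : state :=
  mkState 0%Z 1%Z [VInt 0; VInt 1] (VInt 0) (VInt 1) [].

Fixpoint ins_after (b v : vertex) (l : list vertex) : list vertex :=
  match l with
  | [] => []
  | x :: l' => if veqb x b then x :: v :: l' else x :: ins_after b v l'
  end.

(* left neighbour of b on the upper path = counterclockwise boundary neighbour *)
Fixpoint left_nb (b : vertex) (l : list vertex) : vertex :=
  match l with
  | x :: ((y :: _) as l') => if veqb y b then x else left_nb b l'
  | _ => b
  end.

(* right neighbour of r on the upper path = clockwise boundary neighbour *)
Fixpoint right_nb (r : vertex) (l : list vertex) : vertex :=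
  match l with
  | x :: ((y :: _) as l') => if veqb x r then y else right_nb r l'
  | _ => r
  end.

Definition remove_v (v : vertex) (l : list vertex) : list vertex :=
  filter (fun x => negb (veqb x v)) l.

Definition replace_v (v v' : vertex) (l : list vertex) : list vertex :=
  map (fun x => if veqb x v then v' else x) l.

Definition step (j : nat) (x : letter) (s : state) : state :=
  let b := bact s in let r := ract s in
  let v := VNew (S j) in
  match x with
  | LB => mkState (lo s) (hi s) (ins_after b v (top s)) v r
                  (tris s ++ [(b, r, v)])
  | LR => mkState (lo s) (hi s) (ins_after b v (top s)) b v
                  (tris s ++ [(b, r, v)])
  | Lb => match b with
          | VInt m => let b' := VInt (m - 1) in
                      mkState (m - 1)%Z (hi s) (replace_v b b' (top s)) b' r
                              (tris s ++ [(b', b, r)])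
          | VNew _ => let b' := left_nb b (top s) in
                      mkState (lo s) (hi s) (remove_v b (top s)) b' r
                              (tris s ++ [(b', b, r)])
          end
  | Lr => match r with
          | VInt m => let r' := VInt (m + 1) in
                      mkState (lo s) (m + 1)%Z (replace_v r r' (top s)) b r'
                              (tris s ++ [(b, r, r')])
          | VNew _ => let r' := right_nb r (top s) in
                      mkState (lo s) (hi s) (remove_v r (top s)) b r'
                              (tris s ++ [(b, r, r')])
          end
  end.

Fixpoint build_from (j : nat) (w : list letter) (s : state) : state :=
  match w with
  | [] => s
  | x :: w' => build_from (S j) w' (step j x s)
  end.

Definition D (X : list letter) : state := build_from 0 X init_state.

(* rooted triangulations: the triangulation together with the index
   (1-based step number) of the root triangle *)
Record rooted := mkRooted { tri : state; root : nat }.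

Definition Tplus (X : list letter) : rooted := mkRooted (D X) 1.
Definition T (X : list letter) (k : nat) : rooted := mkRooted (D X) k.

Definition Zrange (a b : Z) : list Z :=
  map (fun i => (a + Z.of_nat i)%Z) (seq 0 (Z.to_nat (b - a + 1))).

(* vertices on the topological boundary of the support: the integers of the
   real segment [lo, hi] and the vertices of the upper boundary path *)
Definition bdry_vertices (s : state) : list vertex :=
  nodup vertex_eq_dec (map VInt (Zrange (lo s) (hi s)) ++ top s).

Definition bdry_size (Tr : rooted) : nat := length (bdry_vertices (tri Tr)).

Fixpoint words (n : nat) : list (list letter) :=
  match n with
  | O => [[]]
  | S n' => flat_map (fun w => map (fun x => x :: w) [LB; Lb; LR; Lr]) (words n')
  end.

Definition sample_space (n : nat) : list (list letter * nat) :=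
  list_prod (words n) (seq 1 n).

Definition prob_bdry_ge (n : nat) (t : R) : R :=
  INR (length (filter
         (fun p => if Rle_dec (t * sqrt (INR n)) (INR (bdry_size (T (fst p) (snd p))))
                   then true else false)
         (sample_space n)))
  / INR (length (sample_space n)).

From Stdlib Require Import Reals Lra Lia ZArith List Permutation.
Import ListNotations.

(* The boundary of D_j consists of the integer segment [lo, hi] and the upper
   path lo, b_1 .. b_X, r_1 .. r_Y, hi of created vertices, the active edge
   being [b_X, r_1]; so |dD_j| <= 2 + L + X + R + Y with L = -lo, R = hi - 1.
   The letters B, b move only the blue side (L, X): B sends X to X + 1, and b
   sends X to X - 1, or L to L + 1 if X = 0; the letters R, r act likewise on
   the red side (R, Y).  For nu = 5 lam / 4 and phi X = e^(nu X) + 9 e^(-nu X),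
   the weight e^(lam (L + R)) phi X phi Y dominates e^(lam (|dD_j| - 2)), and
   its average over the four letters grows by a factor at most
   cosh nu <= e^(nu^2 / 2).  Hence E e^(lam |dT_n|) <= 100 e^(2 lam + n nu^2 / 2),
   and Chernoff's bound with lam = 16 t / (25 sqrt n) proves the claim when
   9/2 < t and t sqrt n <= n + 2; otherwise the bound exceeds 1 or the event
   is empty. *)

Lemma veqb_refl u : veqb u u = true.
Proof. unfold veqb; destruct (vertex_eq_dec u u); congruence. Qed.

Lemma veqb_neq u v : u <> v -> veqb u v = false.
Proof. unfold veqb; destruct (vertex_eq_dec u v); congruence. Qed.

Lemma last_cons {A} (c d : A) l : last (c :: l) d = last l c.
Proof.
  revert c d; induction l as [|e l IH]; intros c d; [reflexivity|].
  change (last (e :: l) d = last (e :: l) c). now rewrite !IH.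
Qed.

Lemma last_In {A} (a : A) l : In (last l a) (a :: l).
Proof.
  revert a; induction l as [|c l IH]; intros a; [now left|].
  rewrite last_cons. right. apply IH.
Qed.

Lemma ins_after_cons_neq b v x l : x <> b ->
  ins_after b v (x :: l) = x :: ins_after b v l.
Proof. intros H; simpl; now rewrite veqb_neq. Qed.

Lemma ins_after_last a l v rest : NoDup (a :: l ++ rest) ->
  ins_after (last l a) v (a :: l ++ rest) = a :: l ++ v :: rest.
Proof.
  revert a; induction l as [|c l IH]; intros a Hnd.
  - simpl. now rewrite veqb_refl.
  - apply NoDup_cons_iff in Hnd as [Ha Hnd].
    cbn [app] in *. rewrite last_cons, ins_after_cons_neq, (IH c Hnd); [reflexivity|].
    intros E. apply Ha. rewrite E. apply (in_app_iff (c :: l)). left. apply last_In.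
Qed.

Lemma left_nb_cons2 b x y l :
  left_nb b (x :: y :: l) = if veqb y b then x else left_nb b (y :: l).
Proof. reflexivity. Qed.

Lemma left_nb_last a l b rest : NoDup (a :: l ++ b :: rest) ->
  left_nb b (a :: l ++ b :: rest) = last l a.
Proof.
  revert a; induction l as [|c l IH]; intros a Hnd.
  - simpl. now rewrite veqb_refl.
  - apply NoDup_cons_iff in Hnd as [_ Hnd]. cbn [app] in *.
    assert (c <> b) by (intros ->; apply NoDup_cons_iff in Hnd as [Hb _];
                        apply Hb, in_or_app; right; now left).
    rewrite left_nb_cons2, veqb_neq, last_cons by trivial. now apply IH.
Qed.

Lemma right_nb_hd l r m d : NoDup (l ++ r :: m ++ [d]) ->
  right_nb r (l ++ r :: m ++ [d]) = hd d m.
Proof.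
  induction l as [|x l IH]; intros Hnd.
  - simpl. rewrite veqb_refl. now destruct m.
  - apply NoDup_cons_iff in Hnd as [Hx Hnd].
    assert (x <> r) by (intros ->; apply Hx, in_or_app; right; now left).
    destruct l as [|z l]; simpl in *; rewrite veqb_neq by trivial; now apply IH.
Qed.

Lemma remove_v_notin v l : ~ In v l -> remove_v v l = l.
Proof.
  induction l as [|x l IH]; intros H; simpl; auto.
  rewrite veqb_neq, IH by (intro E; apply H; subst; simpl; auto). reflexivity.
Qed.

Lemma remove_v_split l1 v l2 : NoDup (l1 ++ v :: l2) ->
  remove_v v (l1 ++ v :: l2) = l1 ++ l2.
Proof.
  intros Hnd. apply NoDup_remove_2 in Hnd.
  unfold remove_v. rewrite filter_app. simpl. rewrite veqb_refl. simpl.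
  rewrite <- filter_app. apply remove_v_notin, Hnd.
Qed.

Lemma replace_v_notin v v' l : ~ In v l -> replace_v v v' l = l.
Proof.
  induction l as [|x l IH]; intros H; simpl; auto.
  rewrite veqb_neq, IH by (intro E; apply H; subst; simpl; auto). reflexivity.
Qed.

Lemma replace_v_split l1 v v' l2 : NoDup (l1 ++ v :: l2) ->
  replace_v v v' (l1 ++ v :: l2) = l1 ++ v' :: l2.
Proof.
  intros Hnd. apply NoDup_remove_2 in Hnd.
  rewrite in_app_iff in Hnd.
  unfold replace_v. rewrite map_app. simpl. rewrite veqb_refl.
  fold (replace_v v v' l1) (replace_v v v' l2).
  rewrite !replace_v_notin; tauto.
Qed.

Definition created_by (j : nat) (v : vertex) : Prop := exists k, v = VNew k /\ (k <= j)%nat.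

Lemma created_by_not_int j z l : Forall (created_by j) l -> ~ In (VInt z) l.
Proof.
  intros Hl Hz. rewrite Forall_forall in Hl. now destruct (Hl _ Hz) as (k & E & _).
Qed.

Lemma created_by_In j l v : Forall (created_by j) l -> In v l -> exists k, v = VNew k.
Proof.
  intros Hl Hv. rewrite Forall_forall in Hl. destruct (Hl _ Hv) as (k & E & _). now exists k.
Qed.

Lemma created_by_fresh j l : Forall (created_by j) l -> ~ In (VNew (S j)) l.
Proof.
  intros Hl Hv. rewrite Forall_forall in Hl.
  destruct (Hl _ Hv) as (k & E & Hk). injection E. lia.
Qed.

Lemma created_by_S j l : Forall (created_by j) l -> Forall (created_by (S j)) l.
Proof.
  apply Forall_impl. intros v (k & E & Hk). exists k. split; [exact E | lia].
Qed.

Lemma created_by_new j l : Forall (created_by j) l ->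
  Forall (created_by (S j)) (VNew (S j) :: l).
Proof. intros Hl. constructor; [now exists (S j) | now apply created_by_S]. Qed.

Lemma NoDup_between_ints j a b l : a <> b -> NoDup l -> Forall (created_by j) l ->
  NoDup (VInt a :: l ++ [VInt b]).
Proof.
  intros Hab Hnd Hl. constructor.
  - rewrite in_app_iff. intros [Ha | [E | []]].
    + exact (created_by_not_int _ _ _ Hl Ha).
    + congruence.
  - apply NoDup_app; [exact Hnd | repeat constructor; auto |].
    intros v Hv [<- | []]. exact (created_by_not_int _ _ _ Hl Hv).
Qed.

Lemma NoDup_insert {A} (l1 l2 : list A) v :
  ~ In v (l1 ++ l2) -> NoDup (l1 ++ l2) -> NoDup (l1 ++ v :: l2).
Proof.
  intros Hv Hnd. apply Permutation_NoDup with (v :: l1 ++ l2);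
    [apply Permutation_middle | now constructor].
Qed.

Definition profile := ((nat * nat) * (nat * nat))%type.

Definition shaped (j : nat) (s : state) (c : profile) : Prop :=
  let '((L, X), (R, Y)) := c in
  exists Bs Rs,
    lo s = (- Z.of_nat L)%Z /\ hi s = (1 + Z.of_nat R)%Z /\
    top s = VInt (lo s) :: Bs ++ Rs ++ [VInt (hi s)] /\
    length Bs = X /\ length Rs = Y /\
    bact s = last Bs (VInt (lo s)) /\ ract s = hd (VInt (hi s)) Rs /\
    NoDup (Bs ++ Rs) /\ Forall (created_by j) (Bs ++ Rs) /\ (L + X + R + Y <= j)%nat.

Definition advance (p : nat * nat) : nat * nat := (fst p, S (snd p)).

Definition retreat (p : nat * nat) : nat * nat :=
  match p with (L, 0) => (S L, 0) | (L, S X) => (L, X) end.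

Definition next_profile (x : letter) (c : profile) : profile :=
  match x with
  | LB => (advance (fst c), snd c)
  | Lb => (retreat (fst c), snd c)
  | LR => (fst c, advance (snd c))
  | Lr => (fst c, retreat (snd c))
  end.

Lemma shaped_init : shaped 0 init_state ((0, 0), (0, 0)).
Proof. exists [], []. simpl. repeat split; constructor. Qed.

Ltac destruct_shaped H :=
  destruct H as (Bs & Rs & Hlo & Hhi & Htop & HX & HY & Hb & Hr & Hnd & Hcr & Hsize).

Lemma shaped_top_NoDup j s L R Bs Rs :
  lo s = (- Z.of_nat L)%Z -> hi s = (1 + Z.of_nat R)%Z ->
  NoDup (Bs ++ Rs) -> Forall (created_by j) (Bs ++ Rs) ->
  NoDup (VInt (lo s) :: Bs ++ Rs ++ [VInt (hi s)]).
Proof.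
  intros Hlo Hhi Hnd Hcr. rewrite app_assoc.
  apply (NoDup_between_ints j); [lia | exact Hnd | exact Hcr].
Qed.

Lemma shaped_step_LB j s b r : shaped j s (b, r) ->
  shaped (S j) (step j LB s) (advance b, r).
Proof.
  destruct b as [L X], r as [R Y]; intros H; destruct_shaped H.
  pose proof (shaped_top_NoDup _ _ _ _ _ _ Hlo Hhi Hnd Hcr) as Htopnd.
  exists (Bs ++ [VNew (S j)]), Rs. simpl.
  repeat split; auto.
  - rewrite Hb, Htop, ins_after_last by exact Htopnd. now rewrite <- app_assoc.
  - rewrite length_app. simpl. lia.
  - now rewrite last_last.
  - rewrite <- app_assoc. apply NoDup_insert; [|exact Hnd].
    exact (created_by_fresh _ _ Hcr).
  - rewrite <- app_assoc. apply Forall_app in Hcr as [HcrB HcrR].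
    apply Forall_app. split; [now apply created_by_S | now apply created_by_new].
  - lia.
Qed.

Lemma shaped_step_LR j s b r : shaped j s (b, r) ->
  shaped (S j) (step j LR s) (b, advance r).
Proof.
  destruct b as [L X], r as [R Y]; intros H; destruct_shaped H.
  pose proof (shaped_top_NoDup _ _ _ _ _ _ Hlo Hhi Hnd Hcr) as Htopnd.
  exists Bs, (VNew (S j) :: Rs). simpl.
  repeat split; auto.
  - now rewrite Hb, Htop, ins_after_last by exact Htopnd.
  - apply NoDup_insert; [exact (created_by_fresh _ _ Hcr) | exact Hnd].
  - apply Forall_app in Hcr as [HcrB HcrR].
    apply Forall_app. split; [now apply created_by_S | now apply created_by_new].
  - lia.
Qed.

Lemma shaped_step_Lb j s b r : shaped j s (b, r) ->
  shaped (S j) (step j Lb s) (retreat b, r).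
Proof.
  destruct b as [L [|X]], r as [R Y]; intros H; destruct_shaped H;
    pose proof (shaped_top_NoDup _ _ _ _ _ _ Hlo Hhi Hnd Hcr) as Htopnd.
  - destruct Bs; [|discriminate]. simpl in Hb, Htopnd |- *.
    unfold step. rewrite Hb. exists [], Rs. simpl.
    repeat split; auto.
    + lia.
    + rewrite Htop. apply (replace_v_split []), Htopnd.
    + now apply created_by_S.
    + lia.
  - destruct (exists_last (l := Bs)) as (Bs0 & bv & ->); [now intros -> |].
    rewrite last_last in Hb. rewrite <- app_assoc in Hnd, Hcr, Htop, Htopnd.
    destruct (created_by_In _ _ bv Hcr) as [k ->]; [apply in_or_app; right; now left|].
    unfold step. rewrite Hb. exists Bs0, Rs. simpl.
    rewrite length_app in HX. simpl in HX.
    repeat split; auto.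
    + rewrite Htop. apply (remove_v_split (VInt (lo s) :: Bs0)), Htopnd.
    + lia.
    + rewrite Htop. apply left_nb_last, Htopnd.
    + exact (NoDup_remove_1 _ _ _ Hnd).
    + apply created_by_S. apply Forall_app in Hcr as [HcrB HcrR].
      apply Forall_app. split; [exact HcrB | exact (Forall_inv_tail HcrR)].
    + lia.
Qed.

Lemma shaped_step_Lr j s b r : shaped j s (b, r) ->
  shaped (S j) (step j Lr s) (b, retreat r).
Proof.
  destruct b as [L X], r as [R [|Y]]; intros H; destruct_shaped H;
    pose proof (shaped_top_NoDup _ _ _ _ _ _ Hlo Hhi Hnd Hcr) as Htopnd.
  - destruct Rs; [|discriminate]. rewrite app_nil_r in Hnd, Hcr. simpl in Hr, Htop, Htopnd.
    unfold step. rewrite Hr. exists Bs, []. cbn -[Z.of_nat Z.add].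
    repeat split; auto.
    + lia.
    + rewrite Htop. apply (replace_v_split (VInt (lo s) :: Bs) _ _ []), Htopnd.
    + now rewrite app_nil_r.
    + rewrite app_nil_r. now apply created_by_S.
    + lia.
  - destruct Rs as [|rv Rs0]; [discriminate|]. simpl in Hr, HY.
    destruct (created_by_In _ _ rv Hcr) as [k ->]; [apply in_or_app; right; now left|].
    change (VInt (lo s) :: Bs ++ (VNew k :: Rs0) ++ [VInt (hi s)])
      with ((VInt (lo s) :: Bs) ++ VNew k :: Rs0 ++ [VInt (hi s)]) in Htop, Htopnd.
    unfold step. rewrite Hr. exists Bs, Rs0. simpl.
    repeat split; auto.
    + rewrite Htop, remove_v_split by exact Htopnd. reflexivity.
    + rewrite Htop. apply right_nb_hd, Htopnd.
    + exact (NoDup_remove_1 _ _ _ Hnd).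
    + apply created_by_S. apply Forall_app in Hcr as [HcrB HcrR].
      apply Forall_app. split; [exact HcrB | exact (Forall_inv_tail HcrR)].
    + lia.
Qed.

Lemma shaped_step j s x c : shaped j s c -> shaped (S j) (step j x s) (next_profile x c).
Proof.
  destruct c as [b r]; destruct x;
    [apply shaped_step_LB | apply shaped_step_Lb | apply shaped_step_LR | apply shaped_step_Lr].
Qed.

Lemma bdry_le_profile j s L X R Y : shaped j s ((L, X), (R, Y)) ->
  (length (bdry_vertices s) <= 2 + (L + X) + (R + Y))%nat.
Proof.
  intros H; destruct_shaped H. unfold bdry_vertices.
  set (ints := map VInt (Zrange (lo s) (hi s))).
  assert (Hints : forall z, (lo s <= z <= hi s)%Z -> In (VInt z) ints).
  { intros z Hz. apply in_map, in_map_iff. exists (Z.to_nat (z - lo s)).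
    split; [lia | apply in_seq; lia]. }
  apply Nat.le_trans with (length (ints ++ Bs ++ Rs)).
  - apply NoDup_incl_length; [apply NoDup_nodup|].
    intros v Hv. apply nodup_In in Hv. rewrite Htop in Hv.
    rewrite in_app_iff in Hv. simpl in Hv. rewrite !in_app_iff in Hv |- *. simpl in Hv.
    destruct Hv as [Hv | [<- | [Hv | [Hv | [<- | []]]]]]; auto.
    all: left; apply Hints; lia.
  - unfold ints, Zrange. rewrite !length_app, !length_map, length_seq. lia.
Qed.

Lemma shaped_build w : forall j s c, shaped j s c ->
  exists c', shaped (j + length w) (build_from j w s) c'.
Proof.
  induction w as [|x w IH]; intros j s c H; simpl.
  - exists c. now rewrite Nat.add_0_r.
  - rewrite <- Nat.add_succ_comm. exact (IH _ _ _ (shaped_step j s x c H)).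
Qed.

Lemma bdry_le_length w : (length (bdry_vertices (D w)) <= 2 + length w)%nat.
Proof.
  destruct (shaped_build w 0 init_state _ shaped_init) as ([[L X] [R Y]] & H).
  pose proof (bdry_le_profile _ _ _ _ _ _ H).
  destruct H as (Bs & Rs & _ & _ & _ & _ & _ & _ & _ & _ & _ & Hsize).
  unfold D. lia.
Qed.

Open Scope R_scope.

Definition sumR {A} (f : A -> R) (l : list A) : R := fold_right (fun a acc => f a + acc) 0 l.

Lemma sumR_le {A} (f g : A -> R) l : (forall a, In a l -> f a <= g a) -> sumR f l <= sumR g l.
Proof.
  induction l as [|a l IH]; intros H; simpl; [lra|].
  apply Rplus_le_compat; [apply H; now left | apply IH; intros; apply H; now right].
Qed.

Lemma sumR_plus {A} (f g : A -> R) l : sumR (fun a => f a + g a) l = sumR f l + sumR g l.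
Proof. induction l as [|a l IH]; simpl; [lra|]. rewrite IH. ring. Qed.

Lemma sumR_mult_l {A} (k : R) (f : A -> R) l : sumR (fun a => k * f a) l = k * sumR f l.
Proof. induction l as [|a l IH]; simpl; [ring|]. rewrite IH. ring. Qed.

Lemma sumR_comm {A B} (f : A -> B -> R) l1 l2 :
  sumR (fun a => sumR (f a) l2) l1 = sumR (fun b => sumR (fun a => f a b) l1) l2.
Proof.
  induction l1 as [|a l1 IH]; simpl.
  - induction l2 as [|b l2 IH2]; simpl; [reflexivity | rewrite <- IH2; ring].
  - rewrite IH, <- sumR_plus. reflexivity.
Qed.

Lemma sumR_app {A} (f : A -> R) l1 l2 : sumR f (l1 ++ l2) = sumR f l1 + sumR f l2.
Proof. induction l1 as [|a l1 IH]; simpl; [ring|]. rewrite IH. ring. Qed.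

Definition letters : list letter := [LB; Lb; LR; Lr].

Lemma words_S n : words (S n) = flat_map (fun w => map (fun x => x :: w) letters) (words n).
Proof. reflexivity. Qed.

Lemma sumR_words_S (f : list letter -> R) n :
  sumR f (words (S n)) = sumR (fun x => sumR (fun w => f (x :: w)) (words n)) letters.
Proof.
  rewrite <- sumR_comm, words_S.
  induction (words n) as [|w ws IH]; cbn [flat_map]; [reflexivity|].
  rewrite sumR_app, IH. simpl. ring.
Qed.

Lemma exp_mono x y : x <= y -> exp x <= exp y.
Proof. intros [H | ->]; [now left; apply exp_increasing | now right]. Qed.

Lemma exp_INR_mult k x : exp (INR k * x) = exp x ^ k.
Proof.
  induction k as [|k IH]; [simpl; now rewrite Rmult_0_l, exp_0|].
  rewrite S_INR, Rmult_plus_distr_r, Rmult_1_l, exp_plus, IH. simpl. ring.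
Qed.

Lemma ten_pow9_le u : 0 <= u -> 10 * u ^ 9 <= 9 * u ^ 10 + 1.
Proof.
  intros Hu.
  assert (0 <= 1 + 2*u + 3*u^2 + 4*u^3 + 5*u^4 + 6*u^5 + 7*u^6 + 8*u^7 + 9*u^8)
    by (repeat (apply Rplus_le_le_0_compat || apply Rmult_le_pos || apply pow_le); lra).
  assert (0 <= (u - 1) ^ 2 *
    (1 + 2*u + 3*u^2 + 4*u^3 + 5*u^4 + 6*u^5 + 7*u^6 + 8*u^7 + 9*u^8))
    by (apply Rmult_le_pos; [apply pow2_ge_0 | assumption]).
  nra.
Qed.

Lemma ten_exp_le lam : 0 <= lam -> 10 * exp lam <= 9 * exp (5 * lam / 4) + exp (- (5 * lam / 4)).
Proof.
  intros Hl. set (u := exp (lam / 4)).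
  assert (Hu : 0 < u) by apply exp_pos.
  assert (E4 : exp lam = u ^ 4)
    by (unfold u; rewrite <- exp_INR_mult; f_equal; simpl; lra).
  assert (E5 : exp (5 * lam / 4) = u ^ 5)
    by (unfold u; rewrite <- exp_INR_mult; f_equal; simpl; lra).
  rewrite exp_Ropp, E4, E5.
  pose proof (ten_pow9_le u (Rlt_le _ _ Hu)).
  assert (H5 : 0 < u ^ 5) by (apply pow_lt; auto).
  apply Rmult_le_reg_r with (u ^ 5); [exact H5|].
  replace ((9 * u ^ 5 + / u ^ 5) * u ^ 5) with (9 * u ^ 10 + 1) by (field; lra).
  replace (10 * u ^ 4 * u ^ 5) with (10 * u ^ 9) by ring. assumption.
Qed.

Definition phi (nu : R) (X : nat) : R := exp (nu * INR X) + 9 * exp (- (nu * INR X)).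

Lemma phi_pos nu X : 0 < phi nu X.
Proof.
  unfold phi. pose proof (exp_pos (nu * INR X)). pose proof (exp_pos (- (nu * INR X))). lra.
Qed.

Lemma phi_harmonic nu X : phi nu (S (S X)) + phi nu X = (exp nu + exp (- nu)) * phi nu (S X).
Proof.
  unfold phi. rewrite !S_INR.
  replace (nu * (INR X + 1 + 1)) with (nu * INR X + nu + nu) by ring.
  replace (nu * (INR X + 1)) with (nu * INR X + nu) by ring.
  rewrite !Ropp_plus_distr, !exp_plus, !exp_Ropp.
  pose proof (exp_pos nu). pose proof (exp_pos (nu * INR X)).
  field; lra.
Qed.

Section Weight.

Variable lam : R.
Hypothesis lam_ge0 : 0 <= lam.

Let nu := 5 * lam / 4.

Definition side_weight (p : nat * nat) : R := exp (lam * INR (fst p)) * phi nu (snd p).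

Definition weight (c : profile) : R := side_weight (fst c) * side_weight (snd c).

Lemma side_weight_pos p : 0 < side_weight p.
Proof. apply Rmult_lt_0_compat; [apply exp_pos | apply phi_pos]. Qed.

(* For X > 0 this is the harmonicity of phi; for X = 0 it is ten_exp_le,
   which is where the constant 9 in phi comes from. *)
Lemma side_weight_step p :
  side_weight (advance p) + side_weight (retreat p) <= (exp nu + exp (- nu)) * side_weight p.
Proof.
  destruct p as [L [|X]]; unfold side_weight; simpl fst; simpl snd.
  - rewrite S_INR, Rmult_plus_distr_l, Rmult_1_r, exp_plus.
    assert (phi nu 1 + exp lam * phi nu 0 <= (exp nu + exp (- nu)) * phi nu 0).
    { unfold phi. simpl INR. rewrite Rmult_0_r, Ropp_0, exp_0, Rmult_1_r.
      pose proof (ten_exp_le lam lam_ge0). unfold nu. lra. }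
    pose proof (exp_pos (lam * INR L)). nra.
  - rewrite <- Rmult_plus_distr_l, phi_harmonic. right. ring.
Qed.

Lemma weight_step c :
  sumR (fun x => weight (next_profile x c)) letters <= 2 * (exp nu + exp (- nu)) * weight c.
Proof.
  destruct c as [b r]. unfold weight. simpl.
  pose proof (side_weight_step b). pose proof (side_weight_step r).
  pose proof (side_weight_pos b). pose proof (side_weight_pos r).
  nra.
Qed.

Lemma exp_le_side_weight L X : exp (lam * INR (L + X)) <= side_weight (L, X).
Proof.
  unfold side_weight, phi; simpl fst; simpl snd.
  rewrite plus_INR, Rmult_plus_distr_l, exp_plus.
  pose proof (exp_pos (lam * INR L)). pose proof (exp_pos (- (nu * INR X))).
  assert (exp (lam * INR X) <= exp (nu * INR X))
    by (apply exp_mono; unfold nu; pose proof (pos_INR X); nra).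
  nra.
Qed.

Lemma exp_bdry_le_weight j s c : shaped j s c ->
  exp (lam * INR (length (bdry_vertices s))) <= exp (2 * lam) * weight c.
Proof.
  destruct c as [[L X] [R Y]]. intros H.
  apply Rle_trans with (exp (lam * INR (2 + (L + X) + (R + Y)))).
  { apply exp_mono, Rmult_le_compat_l; [exact lam_ge0|].
    apply le_INR, (bdry_le_profile _ _ _ _ _ _ H). }
  replace (lam * INR (2 + (L + X) + (R + Y)))
    with (2 * lam + lam * INR (L + X) + lam * INR (R + Y)) by (rewrite !plus_INR; simpl; ring).
  rewrite !exp_plus, Rmult_assoc. unfold weight. simpl fst; simpl snd.
  pose proof (exp_le_side_weight L X). pose proof (exp_le_side_weight R Y).
  pose proof (exp_pos (lam * INR (L + X))). pose proof (exp_pos (lam * INR (R + Y))).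
  apply Rmult_le_compat_l; [left; apply exp_pos | apply Rmult_le_compat; lra].
Qed.

Lemma mgf_build_le n : forall j s c, shaped j s c ->
  sumR (fun w => exp (lam * INR (length (bdry_vertices (build_from j w s))))) (words n)
  <= (2 * (exp nu + exp (- nu))) ^ n * (exp (2 * lam) * weight c).
Proof.
  set (K := 2 * (exp nu + exp (- nu))).
  assert (HK : 0 <= K) by (unfold K; pose proof (exp_pos nu); pose proof (exp_pos (- nu)); lra).
  induction n as [|n IH]; intros j s c H.
  - simpl. pose proof (exp_bdry_le_weight j s c H). lra.
  - rewrite sumR_words_S. simpl build_from.
    apply Rle_trans with
      (sumR (fun x => K ^ n * exp (2 * lam) * weight (next_profile x c)) letters).
    { apply sumR_le. intros x _. rewrite Rmult_assoc. apply IH, shaped_step, H. }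
    rewrite sumR_mult_l.
    pose proof (weight_step c) as Hstep; fold K in Hstep.
    assert (0 <= K ^ n * exp (2 * lam))
      by (apply Rmult_le_pos; [apply pow_le, HK | left; apply exp_pos]).
    simpl pow. nra.
Qed.
End Weight.

Lemma sinh_le_mult_cosh x : 0 <= x -> sinh x <= x * cosh x.
Proof.
  intros [Hx | <-]; [| rewrite sinh_0; lra].
  destruct (MVT_cor2 (fun y => y * cosh y - sinh y) (fun y => y * sinh y) 0 x Hx)
    as [c [Hc Hcx]].
  - intros c _.
    replace (c * sinh c) with ((1 * cosh c + c * sinh c) - cosh c) by ring.
    apply (derivable_pt_lim_minus (fun y => y * cosh y) sinh); [|apply derivable_pt_lim_sinh].
    apply (derivable_pt_lim_mult id cosh);
      [apply derivable_pt_lim_id | apply derivable_pt_lim_cosh].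
  - rewrite sinh_0 in Hc.
    assert (0 < sinh c) by (rewrite <- sinh_0; apply sinh_lt, Hcx).
    assert (0 <= c * sinh c * (x - 0)) by (apply Rmult_le_pos; [apply Rmult_le_pos|]; lra).
    lra.
Qed.

(* exp (-y^2/2) cosh y is nonincreasing on [0, +oo), by sinh_le_mult_cosh. *)
Lemma cosh_le_exp_sqr x : 0 <= x -> cosh x <= exp (x * x / 2).
Proof.
  intros [Hx | <-].
  2:{ rewrite cosh_0, Rmult_0_l, Rdiv_0_l, exp_0. lra. }
  set (g := fun y => cosh y * exp (- (y * y / 2))).
  destruct (MVT_cor2 g (fun y => exp (- (y * y / 2)) * (sinh y - y * cosh y)) 0 x Hx)
    as [c [Hc Hcx]].
  - intros c _.
    replace (exp (- (c * c / 2)) * (sinh c - c * cosh c)) with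
      (sinh c * exp (- (c * c / 2)) + cosh c * (exp (- (c * c / 2)) * (- ((1 * c + c * 1) / 2))))
      by field.
    apply (derivable_pt_lim_mult cosh (fun y => exp (- (y * y / 2))));
      [apply derivable_pt_lim_cosh|].
    apply (derivable_pt_lim_comp (fun y => - (y * y / 2)) exp); [|apply derivable_pt_lim_exp].
    apply (derivable_pt_lim_opp (fun y => y * y / 2)), (derivable_pt_lim_div_scal (fun y => y * y)).
    apply (derivable_pt_lim_mult id id); apply derivable_pt_lim_id.
  - assert (Hg0 : g 0 = 1) by (unfold g; rewrite cosh_0, Rmult_0_l, Rdiv_0_l, Ropp_0, exp_0; ring).
    pose proof (sinh_le_mult_cosh c (Rlt_le _ _ (proj1 Hcx))).
    pose proof (exp_pos (- (c * c / 2))).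
    assert (Hgx : g x <= 1).
    { rewrite <- Hg0. assert (exp (- (c * c / 2)) * (sinh c - c * cosh c) * (x - 0) <= 0); [|lra].
      assert (exp (- (c * c / 2)) * (sinh c - c * cosh c) <= 0).
      { rewrite <- (Rmult_0_r (exp (- (c * c / 2)))). apply Rmult_le_compat_l; lra. }
      apply Rle_trans with (0 * (x - 0)); [apply Rmult_le_compat_r|]; lra. }
    unfold g in Hgx. rewrite exp_Ropp in Hgx. pose proof (exp_pos (x * x / 2)).
    apply Rmult_le_reg_r with (/ exp (x * x / 2)); [now apply Rinv_0_lt_compat|].
    rewrite Rinv_r by lra. exact Hgx.
Qed.

Lemma exp_le_inv_one_minus a : a < 1 -> exp a <= / (1 - a).
Proof.
  intros Ha. pose proof (exp_ineq1_le (- a)) as Hexp. pose proof (exp_pos a).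
  rewrite exp_Ropp in Hexp.
  apply Rmult_le_reg_r with (1 - a); [lra|]. rewrite Rinv_l by lra.
  apply Rmult_le_reg_r with (/ exp a); [now apply Rinv_0_lt_compat|].
  replace (exp a * (1 - a) * / exp a) with (1 - a) by (field; lra). lra.
Qed.

Lemma exp_81_128_le_2 : exp (81 / 128) <= 2.
Proof.
  replace (81 / 128) with (INR 8 * (81 / 1024)) by (simpl; lra).
  rewrite exp_INR_mult. apply Rle_trans with ((/ (1 - 81 / 1024)) ^ 8).
  - apply pow_incr. split; [left; apply exp_pos | apply exp_le_inv_one_minus; lra].
  - simpl. lra.
Qed.

Lemma exp_22_5_ge_50 : 50 <= exp (22 / 5).
Proof.
  replace (22 / 5) with (INR 32 * (11 / 80)) by (simpl; lra).
  rewrite exp_INR_mult. apply Rle_trans with ((1 + 11 / 80) ^ 32).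
  - simpl. lra.
  - apply pow_incr. split; [lra | apply exp_ineq1_le].
Qed.

Lemma words_length n : length (words n) = (4 ^ n)%nat.
Proof.
  induction n as [|n IH]; [reflexivity|].
  rewrite words_S, Nat.pow_succ_r', <- IH. clear IH.
  induction (words n) as [|w ws IHws]; [reflexivity|].
  cbn [flat_map]. rewrite length_app, IHws. simpl. lia.
Qed.

Lemma words_length_in n w : In w (words n) -> length w = n.
Proof.
  revert w; induction n as [|n IH]; intros w Hw.
  - destruct Hw as [<- | []]; reflexivity.
  - rewrite words_S in Hw. apply in_flat_map in Hw as (w0 & Hw0 & Hw).
    apply in_map_iff in Hw as (x & <- & _). simpl. f_equal. now apply IH.
Qed.

Lemma filter_list_prod_length {A B} (f : A * B -> bool) (g : A -> bool) l m :
  (forall a b, f (a, b) = g a) ->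
  length (filter f (list_prod l m)) = (length (filter g l) * length m)%nat.
Proof.
  intros Hfg. induction l as [|a l IH]; [reflexivity|].
  simpl. rewrite filter_app, length_app, IH.
  assert (length (filter f (map (fun y => (a, y)) m)) = if g a then length m else 0%nat).
  { clear IH. destruct (g a) eqn:Ea; induction m as [|b m IHm];
      simpl; rewrite ?Hfg, ?Ea; simpl; rewrite ?IHm; auto. }
  destruct (g a); simpl; lia.
Qed.

Lemma count_ge_mul_exp_le {A} (g : A -> R) a lam l : 0 <= lam ->
  INR (length (filter (fun x => if Rle_dec a (g x) then true else false) l)) * exp (lam * a)
  <= sumR (fun x => exp (lam * g x)) l.
Proof.
  intros Hl. induction l as [|x l IH]; simpl; [lra|].
  pose proof (exp_pos (lam * g x)).
  destruct (Rle_dec a (g x)) as [Ha | Ha]; [|lra].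
  simpl length. rewrite S_INR.
  assert (exp (lam * a) <= exp (lam * g x)) by (apply exp_mono, Rmult_le_compat_l; lra).
  lra.
Qed.

Definition bdry_ge (a : R) (w : list letter) : bool :=
  if Rle_dec a (INR (length (bdry_vertices (D w)))) then true else false.

(* The root k does not affect the triangulation, so it factors out. *)
Lemma prob_bdry_ge_words n t : (1 <= n)%nat ->
  prob_bdry_ge n t =
  INR (length (filter (bdry_ge (t * sqrt (INR n))) (words n))) / INR (4 ^ n).
Proof.
  intros Hn. unfold prob_bdry_ge, sample_space.
  rewrite (filter_list_prod_length _ (bdry_ge (t * sqrt (INR n)))) by reflexivity.
  rewrite length_prod, words_length, length_seq, !mult_INR.
  assert (0 < INR n) by (apply lt_0_INR; lia).
  field. split; [apply not_0_INR, Nat.pow_nonzero; lia | lra].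
Qed.

Lemma mgf_bdry_le lam n : 0 <= lam ->
  sumR (fun w => exp (lam * INR (length (bdry_vertices (D w))))) (words n)
  <= INR (4 ^ n) * (100 * exp (2 * lam + INR n * ((5 * lam / 4) ^ 2 / 2))).
Proof.
  intros Hl. set (nu := 5 * lam / 4).
  eapply Rle_trans; [exact (mgf_build_le lam Hl n 0 init_state _ shaped_init)|].
  assert (Hw : weight lam ((0, 0), (0, 0))%nat = 100).
  { unfold weight, side_weight, phi. simpl. rewrite !Rmult_0_r, Ropp_0, exp_0. ring. }
  fold nu. rewrite Hw, exp_plus, pow_INR, exp_INR_mult.
  replace (INR 4 ^ n * (100 * (exp (2 * lam) * exp (nu ^ 2 / 2) ^ n)))
    with ((INR 4 * exp (nu ^ 2 / 2)) ^ n * (exp (2 * lam) * 100))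
    by (rewrite Rpow_mult_distr; ring).
  apply Rmult_le_compat_r; [pose proof (exp_pos (2 * lam)); lra|].
  pose proof (cosh_le_exp_sqr nu ltac:(unfold nu; lra)) as Hcosh. unfold cosh in Hcosh.
  pose proof (exp_pos nu). pose proof (exp_pos (- nu)).
  apply pow_incr. split; [lra|].
  replace (nu ^ 2) with (nu * nu) by ring. simpl INR. lra.
Qed.

Lemma bdry_tail_le n a lam : 0 <= lam ->
  INR (length (filter (bdry_ge a) (words n))) / INR (4 ^ n)
  <= 100 * exp (2 * lam + INR n * ((5 * lam / 4) ^ 2 / 2) - lam * a).
Proof.
  intros Hl.
  pose proof (count_ge_mul_exp_le (fun w => INR (length (bdry_vertices (D w)))) a lam (words n) Hl)
    as Hmarkov.
  pose proof (mgf_bdry_le lam n Hl) as Hmgf.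
  assert (0 < INR (4 ^ n)) by (apply lt_0_INR, Nat.neq_0_lt_0, Nat.pow_nonzero; lia).
  pose proof (exp_pos (lam * a)).
  unfold Rminus. rewrite exp_plus, exp_Ropp.
  apply Rmult_le_reg_r with (INR (4 ^ n) * exp (lam * a)); [nra|].
  replace (100 * (exp (2 * lam + INR n * ((5 * lam / 4) ^ 2 / 2)) * / exp (lam * a))
    * (INR (4 ^ n) * exp (lam * a)))
    with (INR (4 ^ n) * (100 * exp (2 * lam + INR n * ((5 * lam / 4) ^ 2 / 2)))) by (field; lra).
  set (N := INR (length (filter (bdry_ge a) (words n)))) in *.
  replace (N / INR (4 ^ n) * (INR (4 ^ n) * exp (lam * a))) with (N * exp (lam * a))
    by (field; lra).
  exact (Rle_trans _ _ _ Hmarkov Hmgf).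
Qed.

Lemma one_le_tail_bound t : 0 <= t <= 9 / 2 -> 1 <= 2 * exp (- t ^ 2 / 32).
Proof.
  intros Ht. pose proof exp_81_128_le_2.
  assert (Hmono : exp (- (81 / 128)) <= exp (- t ^ 2 / 32)) by (apply exp_mono; nra).
  rewrite exp_Ropp in Hmono. pose proof (exp_pos (81 / 128)).
  assert (/ 2 <= / exp (81 / 128)) by (apply Rinv_le_contravar; lra).
  lra.
Qed.

(* lam minimizes the quadratic part n (5 lam / 4)^2 / 2 - lam t sqrt n of the exponent. *)
Lemma tail_exponent_bound n t : (1 <= n)%nat -> 9 / 2 < t -> t * sqrt (INR n) <= INR n + 2 ->
  let lam := 16 * t / (25 * sqrt (INR n)) in
  100 * exp (2 * lam + INR n * ((5 * lam / 4) ^ 2 / 2) - lam * (t * sqrt (INR n)))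
  <= 2 * exp (- t ^ 2 / 32).
Proof.
  intros Hn Ht Htq lam. set (q := sqrt (INR n)) in *.
  assert (Hq2 : q * q = INR n) by (apply sqrt_sqrt, pos_INR).
  assert (Hq1 : 1 <= q)
    by (apply le_INR in Hn; simpl in Hn; rewrite <- sqrt_1; now apply sqrt_le_1_alt).
  assert (Hq4 : 4 < q) by nra.
  assert (Hlam : 2 * lam <= 36 / 25).
  { unfold lam. apply Rmult_le_reg_r with (25 * q); [lra|].
    replace (2 * (16 * t / (25 * q)) * (25 * q)) with (32 * t) by (field; lra). nra. }
  replace (2 * lam + INR n * ((5 * lam / 4) ^ 2 / 2) - lam * (t * q))
    with (2 * lam - 8 * t ^ 2 / 25) by (rewrite <- Hq2; unfold lam; field; lra).
  pose proof exp_22_5_ge_50.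
  assert (exp (22 / 5) <= exp (- t ^ 2 / 32 - (2 * lam - 8 * t ^ 2 / 25))) by (apply exp_mono; nra).
  replace (exp (- t ^ 2 / 32)) with
    (exp (- t ^ 2 / 32 - (2 * lam - 8 * t ^ 2 / 25)) * exp (2 * lam - 8 * t ^ 2 / 25))
    by (rewrite <- exp_plus; f_equal; ring).
  pose proof (exp_pos (2 * lam - 8 * t ^ 2 / 25)). nra.
Qed.

Lemma bdry_ge_ratio_le_1 n a :
  INR (length (filter (bdry_ge a) (words n))) / INR (4 ^ n) <= 1.
Proof.
  assert (H4n : 0 < INR (4 ^ n)) by (apply lt_0_INR, Nat.neq_0_lt_0, Nat.pow_nonzero; lia).
  assert (Hcount : INR (length (filter (bdry_ge a) (words n))) <= INR (4 ^ n))
    by (apply le_INR; rewrite <- words_length; apply filter_length_le).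
  apply Rmult_le_reg_r with (INR (4 ^ n)); [exact H4n|].
  unfold Rdiv. rewrite Rmult_assoc, Rinv_l; lra.
Qed.

Lemma bdry_ge_words_none n a : INR n + 2 < a -> length (filter (bdry_ge a) (words n)) = 0%nat.
Proof.
  intros Ha. rewrite (filter_ext_in _ (fun _ => false)), filter_false; [reflexivity|].
  intros w Hw. unfold bdry_ge. destruct (Rle_dec a _) as [Hge|]; [exfalso|reflexivity].
  pose proof (le_INR _ _ (bdry_le_length w)) as Hle.
  rewrite plus_INR, (words_length_in n w Hw) in Hle. simpl in Hle. lra.
Qed.

Theorem lemma3p5 (n : nat) (t : R) (hn : (1 <= n)%nat) (ht : 0 < t) :
  prob_bdry_ge n t <= 2 * exp (- (t ^ 2) / 32).
Proof.
  rewrite prob_bdry_ge_words by exact hn.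
  destruct (Rle_dec t (9 / 2)) as [Ht_small | Ht_large].
  { eapply Rle_trans; [apply bdry_ge_ratio_le_1 | apply one_le_tail_bound; lra]. }
  destruct (Rle_dec (t * sqrt (INR n)) (INR n + 2)) as [Ha | Ha].
  - eapply Rle_trans; [apply bdry_tail_le | apply tail_exponent_bound; [exact hn | lra | exact Ha]].
    apply Rmult_le_pos, Rlt_le, Rinv_0_lt_compat; [lra|].
    apply Rmult_lt_0_compat; [lra | apply sqrt_lt_R0, lt_0_INR; lia].
  - rewrite bdry_ge_words_none by lra.
    unfold Rdiv. rewrite Rmult_0_l. pose proof (exp_pos (- t ^ 2 / 32)). lra.
Qed.
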